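(* Let $R$ and $Q$ be finite sequences of formulas and $S=R\cdot Q$ their concatenation. For all models $I,J$: $I\le_{\emptyset S}J$ holds if and only if $I\le_{\emptyset Q}J$ and (either $J\not\le_{\emptyset Q}I$ or $I\le_{\emptyset R}J$).
   Context: Propositional models are truth assignments over a finite set of variables; a formula used where a set of models is expected stands for its set of models. A doxastic state is a sequence $C=[C(0),\ldots,C(k)]$ of nonempty, pairwise disjoint sets of models covering all models; $I\le_C J$ iff $I\in C(i)$, $J\in C(j)$ with $i\le j$. The flat doxastic state $\emptyset$ is $[\text{all models}]$. Lexicographic revision: $C\,\mathrm{lex}(A)=[C(0)\cap A,\ldots,C(k)\cap A,C(0)\setminus A,\ldots,C(k)\setminus A]$, empty sets discarded. For a sequence of formulas $T=[T_1,\ldots,T_n]$, $\emptyset T$ denotes $\emptyset$ revised lexicographically by $T_1$, then $T_2$, ..., then $T_n$ ($\emptyset[\,]=\emptyset$). *)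

From mathcomp Require Import all_boot.
Set Implicit Arguments. Unset Strict Implicit. Unset Printing Implicit Defensive.

Inductive form (V : Type) : Type :=
| FVar of V | FTrue | FFalse
| FNot of form V | FAnd of form V & form V | FOr of form V & form V
| FImp of form V & form V.

Section Doxastic.
Variable V : finType.

Definition model := {ffun V -> bool}.

Fixpoint sat (I : model) (F : form V) : bool :=
  match F with
  | FVar v => I v
  | FTrue => true
  | FFalse => false
  | FNot G => ~~ sat I G
  | FAnd G H => sat I G && sat I H
  | FOr G H => sat I G || sat I H
  | FImp G H => sat I G ==> sat I H
  end.

Definition mods (F : form V) : {set model} := [set I | sat I F].

(* A doxastic state: a sequence of classes (nonempty, disjoint, covering,
   by construction from the flat state). *)
Notation doxstate := (seq {set model}).

Definition flat : doxstate := [:: [set: model]].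

Definition lex (C : doxstate) (A : form V) : doxstate :=
  filter (fun X => X != set0)
    ([seq X :&: mods A | X <- C] ++ [seq X :\: mods A | X <- C]).

(* emptyset T : the flat state revised by T_1, ..., T_n in order. *)
Definition revise_seq (T : seq (form V)) : doxstate := foldl lex flat T.

Definition level (C : doxstate) (I : model) : nat := find (fun X : {set model} => I \in X) C.

Definition dle (C : doxstate) (I J : model) : bool :=
  has (fun X : {set model} => I \in X) C && has (fun X : {set model} => J \in X) C &&
  (level C I <= level C J).

End Doxastic.

(* Revising by [A] orders models first by membership in [A] and breaks ties
   by the previous order.  Hence revising any state [C] by the sequence [Q]
   yields the order of the flat state revised by [Q], with ties (models that
   [Q] does not separate) broken by [C]; taking [C] to be the flat state
   revised by [R] gives the theorem. *)

From mathcomp Require Import all_boot.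
From mathcomp Require Import zify.

Section FindFilter.
Variables (T : Type) (q : pred T).

Lemma has_filter_sub (p : pred T) (s : seq T) :
  subpred p q -> has p (filter q s) = has p s.
Proof.
move=> pq; elim: s => [|x s IH] //=.
case qx: (q x) => /=; first by rewrite IH.
by rewrite IH; case px: (p x) => //; rewrite (pq _ px) in qx.
Qed.

Lemma leq_find_filter (p p' : pred T) (s : seq T) :
  subpred p q -> subpred p' q ->
  (find p (filter q s) <= find p' (filter q s)) = (find p s <= find p' s).
Proof.
move=> pq p'q; elim: s => [|x s IH] //=.
case qx: (q x) => /=; first by case: (p x); case: (p' x).
case px: (p x); first by rewrite (pq _ px) in qx.
by case p'x: (p' x); [rewrite (p'q _ p'x) in qx | rewrite ltnS].
Qed.

End FindFilter.

Section LexRevision.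
Variable V : finType.

Local Notation contains I := (fun X : {set model V} => I \in X).

Definition covers (C : seq {set model V}) : Prop :=
  forall I : model V, has (contains I) C.

Lemma dleE C (I J : model V) : covers C -> dle C I J = (level C I <= level C J).
Proof. by move=> hC; rewrite /dle !hC. Qed.

Lemma covers_flat : covers (flat V).
Proof. by move=> I; rewrite /= in_setT. Qed.

Lemma dle_flat (I J : model V) : dle (flat V) I J.
Proof.
have /= := covers_flat I; have /= := covers_flat J; rewrite !orbF => hJ hI.
by rewrite /dle /level /= hI hJ.
Qed.

Lemma find_lex_split C A (I : model V) : has (contains I) C ->
  find (contains I) ([seq X :&: mods A | X <- C] ++ [seq X :\: mods A | X <- C])
  = (I \notin mods A) * size C + level C I.
Proof.
move=> hI; rewrite find_cat has_map !find_map size_map /level.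
case: (boolP (I \in mods A)) => IA.
- have eqI : preim (fun X => X :&: mods A) (contains I) =1 contains I.
    by move=> X; rewrite /= in_setI IA andbT.
  by rewrite (eq_has eqI) hI (eq_find eqI).
- have eqI : preim (fun X => X :&: mods A) (contains I) =1 pred0.
    by move=> X; rewrite /= in_setI (negbTE IA) andbF.
  have eqD : preim (fun X => X :\: mods A) (contains I) =1 contains I.
    by move=> X; rewrite /= in_setD IA.
  by rewrite (eq_has eqI) has_pred0 (eq_find eqD) mul1n.
Qed.

Lemma covers_lex C A : covers C -> covers (lex C A).
Proof.
move=> hC I; rewrite /lex has_filter_sub; last by move=> X XI; apply/set0Pn; exists I.
have := hC I; rewrite !has_find size_cat !size_map find_lex_split ?hC // -/(level C I).
by case: (I \notin mods A); lia.
Qed.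

Lemma covers_foldl_lex C (T : seq (form V)) : covers C -> covers (foldl (@lex V) C T).
Proof. by elim: T C => [|A T IH] C hC //=; apply/IH/covers_lex. Qed.

Lemma dle_lex C A (I J : model V) : covers C ->
  dle (lex C A) I J =
  if (I \in mods A) == (J \in mods A) then dle C I J else I \in mods A.
Proof.
move=> hC; have hCA := @covers_lex C A hC; rewrite !dleE // /level /lex.
rewrite leq_find_filter; last 2 first.
- by move=> X XI; apply/set0Pn; exists I.
- by move=> X XJ; apply/set0Pn; exists J.
rewrite !find_lex_split ?hC // -!/(level C _).
have := hC I; have := hC J; rewrite !has_find -!/(level C _).
by case: (I \in mods A); case: (J \in mods A) => /=; lia.
Qed.

Lemma dle_foldl_lex C (Q : seq (form V)) (I J : model V) : covers C ->
  dle (foldl (@lex V) C Q) I J =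
  dle (revise_seq Q) I J && (~~ dle (revise_seq Q) J I || dle C I J).
Proof.
move=> hC; rewrite /revise_seq; elim/last_ind: Q I J => [|Q A IH] I J.
  by rewrite /= !dle_flat.
have hCQ := @covers_foldl_lex C Q hC; have hQ := @covers_foldl_lex _ Q covers_flat.
rewrite !foldl_rcons !dle_lex // !IH.
by case: (I \in mods A); case: (J \in mods A).
Qed.

End LexRevision.

Theorem mainTheorem18 (V : finType) (R Q : seq (form V)) (I J : model V) :
  dle (revise_seq (R ++ Q)) I J =
  dle (revise_seq Q) I J &&
  (~~ dle (revise_seq Q) J I || dle (revise_seq R) I J).
Proof.
rewrite {1}/revise_seq foldl_cat dle_foldl_lex //.
exact/covers_foldl_lex/covers_flat.
Qed.
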